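(* Let $p$ be a prime, let $\Gamma$ be an abelian $p$-group of rank $r$ (written multiplicatively), and suppose that $X\subset\Gamma$ is a union of subgroups of $\Gamma$. Then $\langle X\rangle\subset X^r$.
   Context: The rank of a group is the minimal cardinality of a generating set. $X^r=\{x_1\cdots x_r:x_i\in X\}$ and $\langle X\rangle$ is the subgroup generated by $X$. *)

From mathcomp Require Import all_boot all_fingroup all_solvable.
Set Implicit Arguments. Unset Strict Implicit. Unset Printing Implicit Defensive.
Local Open Scope group_scope.

Definition grank (gT : finGroupType) (G : {set gT}) : nat :=
  \big[minn/#|G|]_(A : {set gT} | (A \subset G) && (<<A>> == G)) #|A|.

Fixpoint setpow (gT : finGroupType) (X : {set gT}) (n : nat) : {set gT} :=
  if n is n'.+1 then X * setpow X n' else 1.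

(** Since X is a union of subgroups it contains <[x]> for each x in X, and in
   an abelian group <<A>> is the product of the <[a]>, a in A; hence
   <<A>> \subset X^#|A| for every A \subset X, and it suffices to find a
   generating set A \subset X of Y = <<X>> with #|A| <= r.  Adjoining elements
   of X one at a time to the Frattini subgroup 'Phi(Y), each new element
   multiplies the index by at least p, so at most
   log_p #|Y : 'Phi(Y)| = 'r(Y / 'Phi(Y)) <= 'r(Y) <= 'r(G) of them are needed,
   and they generate Y because 'Phi(Y) consists of non-generators. *)

From Pilot Require Import Defs.
From mathcomp Require Import all_boot all_fingroup all_solvable.

Set Implicit Arguments.
Unset Strict Implicit.
Unset Printing Implicit Defensive.

Local Open Scope group_scope.

Section SetPow.

Variables (gT : finGroupType) (X : {set gT}).

Lemma setpow_subSn n : 1 \in X -> setpow X n \subset setpow X n.+1.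
Proof. by move=> X1; apply/subsetP=> y Xn_y; rewrite -(mul1g y) mem_mulg. Qed.

Lemma setpow_subn m n : 1 \in X -> m <= n -> setpow X m \subset setpow X n.
Proof.
move=> X1 /subnKC <-; elim: (n - m) => [|k IHk]; first by rewrite addn0.
by rewrite addnS (subset_trans IHk) ?setpow_subSn.
Qed.

Lemma gen_subset_setpow (A : {set gT}) :
  abelian X -> {in X, forall x, <[x]> \subset X} ->
  A \subset X -> <<A>> \subset setpow X #|A|.
Proof.
move=> cXX cycX; elim: {A}_.+1 {-2}A (ltnSn #|A|) => // n IHn A leAn sAX.
have [-> | [x Ax]] := set_0Vmem A; first by rewrite gen0 cards0.
have Xx : x \in X := subsetP sAX x Ax.
have sA'X : A :\ x \subset X := subset_trans (subsetDl A _) sAX.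
have cA'x : <[x]> \subset 'C(<<A :\ x>>).
  have := subsetP (centS sA'X) x (subsetP cXX x Xx).
  by rewrite cycle_subG -cent_gen.
rewrite (cardsD1 x) Ax add1n -{1}(setD1K Ax) /=.
have -> : <<x |: A :\ x>> = <[x]> <*> <<A :\ x>> by rewrite joing_idl joing_idr.
rewrite cent_joinEl // mulgSS ?cycX // IHn //.
by rewrite (cardsD1 x) Ax in leAn.
Qed.

End SetPow.

Section PGroupGenerators.

Variables (gT : finGroupType) (p : nat) (Y : {group gT}).
Hypotheses (p_pr : prime p) (pY : p.-group Y).

Lemma pgroup_proper_index (H K : {group gT}) :
  H \subset Y -> K \proper H -> p <= #|H : K|.
Proof.
move=> sHY /andP[sKH nsHK].
have [k defHK] := p_natP (pnat_dvd (dvdn_indexg H K) (pgroupS sHY pY)).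
have : 1 < #|H : K| by rewrite indexg_gt1.
rewrite defHK; case: k {defHK} => [//|k _].
by rewrite expnS leq_pmulr ?expn_gt0 ?prime_gt0.
Qed.

Lemma pgroup_gen_subset_index (X : {set gT}) (K : {group gT}) :
  X \subset Y -> K \subset Y -> Y \subset X <*> K ->
  exists2 A : {set gT}, A \subset X & Y \subset A <*> K /\ p ^ #|A| <= #|Y : K|.
Proof.
move=> sXY; elim: {K}_.+1 {-2}K (ltnSn #|Y : K|) => // n IHn K leYKn sKY sYXK.
have [sYK | nsYK] := boolP (Y \subset K).
  by exists set0; rewrite ?sub0set // cards0 /joing set0U genGid sYK indexg_gt0.
have [x Xx Kx'] : exists2 x, x \in X & x \notin K.
  apply/subsetPn; apply: contra nsYK => sXK.
  by apply: subset_trans sYXK _; rewrite gen_subG subUset sXK /=.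
pose K' := <<x |: (K : {set gT})>>%G.
have sKK' : K \subset K' := subset_trans (subsetUr _ _) (subset_gen _).
have pKK' : K \proper K'.
  rewrite properEneq sKK' andbT; apply: contraNneq Kx' => ->.
  by rewrite mem_gen ?setU11.
have sK'Y : K' \subset Y by rewrite gen_subG subUset sub1set (subsetP sXY) ?sKY.
have defYK := Lagrange_index sK'Y sKK'.
have ltYK' : #|Y : K'| < #|Y : K|.
  rewrite -defYK -{1}(muln1 #|Y : K'|) ltn_pmul2l ?indexg_gt0 // indexg_gt1.
  by rewrite proper_subn.
have [A sAX [sYAK' leA]] := IHn K' (leq_trans ltYK' leYKn) sK'Y
  (subset_trans sYXK (genS (setUS _ sKK'))).
exists (x |: A); first by rewrite subUset sub1set Xx sAX.
split.
  by rewrite (subset_trans sYAK') // joing_idr /joing setUA (setUC A) -setUA.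
rewrite -defYK; apply: leq_trans (leq_mul leA (pgroup_proper_index sK'Y pKK')).
rewrite -expnSr leq_pexp2l ?prime_gt0 //.
by rewrite cardsU1 addnC -addn1 leq_add2l leq_b1.
Qed.

Lemma card_Phi_quotient : #|Y : 'Phi(Y)| = (p ^ 'r(Y / 'Phi(Y)))%N.
Proof.
have abelYPhi := Phi_quotient_abelem pY.
rewrite -card_quotient ?normal_norm ?Phi_normal // (rank_abelem abelYPhi).
by apply: card_pgroup; case/and3P: abelYPhi.
Qed.

Lemma abelian_pgroup_gen_subset_rank (X : {set gT}) :
  abelian Y -> X \subset Y -> <<X>> = Y ->
  exists2 A : {set gT}, A \subset X & <<A>> = Y /\ #|A| <= 'r(Y).
Proof.
move=> cYY sXY genXY.
have sYXPhi : Y \subset X <*> 'Phi(Y) by rewrite -{1}genXY genS ?subsetUl.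
have [A sAX [sYAPhi leA]] := pgroup_gen_subset_index sXY (Phi_sub Y) sYXPhi.
exists A => //; split.
  apply: Phi_nongen; apply/eqP; rewrite eqEsubset joingC sYAPhi andbT.
  by rewrite join_subG Phi_sub (subset_trans sAX sXY).
rewrite card_Phi_quotient leq_exp2l ?prime_gt1 // in leA.
exact: leq_trans leA (quotient_rank_abelian _ cYY).
Qed.

End PGroupGenerators.

(* [grank] is the rank of Defs; it shadows [abelian.grank], which is 'm(G). *)
Lemma mgrank_le_grank (gT : finGroupType) (G : {group gT}) : 'm(G) <= grank G.
Proof.
apply: (big_ind (fun n => 'm(G) <= n)) => [|m n le_m le_n|A /andP[_ /eqP <-]].
- by have := grank_min G; rewrite genGid.
- by rewrite leq_min le_m.
- exact: grank_min.
Qed.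

Theorem lemma5p5 (gT : finGroupType) (p : nat) (G : {group gT})
    (S : {set {group gT}}) (X : {set gT}) :
  prime p -> p.-group G -> abelian G ->
  S != set0 -> (forall H : {group gT}, H \in S -> H \subset G) ->
  X = \bigcup_(H in S) (H : {set gT}) ->
  <<X>> \subset setpow X (grank G).
Proof.
move=> p_pr pG cGG /set0Pn[H0 SH0] sSG defX.
have sXG : X \subset G by rewrite defX; apply/bigcupsP.
have X1 : 1 \in X by rewrite defX; apply/bigcupP; exists H0.
have cycX : {in X, forall x, <[x]> \subset X}.
  move=> x; rewrite defX => /bigcupP[H SH Hx].
  by rewrite (subset_trans _ (bigcup_sup H SH)) ?cycle_subG.
have sgenXG : <<X>> \subset G by rewrite gen_subG.
have [A sAX [genA leA]] := abelian_pgroup_gen_subset_rank p_pr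
  (pgroupS sgenXG pG) (abelianS sgenXG cGG) (subset_gen X) (erefl <<X>>).
rewrite -genA (subset_trans (gen_subset_setpow (abelianS sXG cGG) cycX sAX)) //.
rewrite setpow_subn // (leq_trans leA) // (leq_trans (rankS sgenXG)) //.
by rewrite -grank_abelian ?mgrank_le_grank.
Qed.
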